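(* If $n\ge 3t+1$, then in every execution of COOL all honest processors output the same message (consistency).
   Context: Setting. $n$ processors indexed by $[1:n]$, pairwise joined by reliable private synchronous channels; recipients know senders. At most $t$ processors are dishonest, controlled by a Byzantine adversary of unbounded computational power knowing all inputs, who may make them deviate arbitrarily (missing values are replaced by a fixed default); the others are honest. Processor $i$ holds an $\ell$-bit initial message $\boldsymbol w_i$. $\phi$ is a default value different from every $\ell$-bit message. Logarithms are base 2. Code. $k=\lfloor t/5\rfloor+1$, $c=\lceil \max\{\ell,(t/5+1)\log(n+1)\}/k\rceil$. Messages are zero-padded to $kc$ bits and viewed in $GF(2^c)^k$. Integers in $[1:n]$ are identified with distinct nonzero elements of $GF(2^c)$; $\boldsymbol h_i\in GF(2^c)^k$ has entries $h_{i,j}=\prod_{p\in[1:k],\,p\ne j}\frac{i-p}{j-p}$ (field arithmetic). COOL (honest processor $i$). Initialization: updated message $\boldsymbol w^{(i)}:=\boldsymbol w_i$, $y^{(i)}_j:=\boldsymbol h_j^{\mathsf T}\boldsymbol w_i$ for $j\in[1:n]$, $u_i(i):=1$. Phase 1. (a) Send $(y^{(i)}_j,y^{(i)}_i)$ to each $j\ne i$. (b) For $j\ne i$, link indicator $u_i(j):=1$ if the pair received from $j$ equals $(y^{(i)}_i,y^{(i)}_j)$, else $0$. Success indicator $s_i:=1$ if $\sum_{j=1}^n u_i(j)\ge n-t$; otherwise $s_i:=0$ and $\boldsymbol w^{(i)}:=\phi$. (c) Send $s_i$ to all; each processor records the indicator received from each $j$ (own for itself) and forms $\mathcal S_1=\{j:s_j=1\}$,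 $\mathcal S_0=\{j:s_j=0\}$ (views may differ). Phase 2. If $s_i=1$: set $u_i(j):=0$ for all $j\in\mathcal S_0$; if now $\sum_j u_i(j)<n-t$, set $s_i:=0$, $\boldsymbol w^{(i)}:=\phi$, and send $s_i=0$ to all. Everyone overwrites recorded indicators with newly received ones and recomputes $\mathcal S_0,\mathcal S_1$. Phase 3. Repeat Phase 2 once more. Vote $v_i:=1$ if the recorded indicators satisfy $\sum_j s_j\ge 2t+1$, else $0$. Run on the votes a deterministic error-free binary Byzantine agreement protocol for $t<n/3$ (e.g. Berman–Garay–Perry or Coan–Welch), which guarantees all honest processors decide, decide equally, and decide the common honest vote when all honest votes agree. If the decision is $0$: set $\boldsymbol w^{(i)}:=\phi$, output $\phi$, stop. Phase 4 (decision 1). If $s_i=0$: replace $y^{(i)}_i$ by the most frequent value (fixed tie-breaking) among the first components of the Phase-1 pairs received from $j\in\mathcal S_1$; send it to each $j\in\mathcal S_0\setminus\{i\}$; with $z_i=y^{(i)}_i$, $z_j$ = value received from $j$ in Phase 4 for $j\in\mathcal S_0\setminus\{i\}$, $z_j$ = second component of the Phase-1 pair from $j$ for $j\in\mathcal S_1$, set $\boldsymbol w^{(i)}$ to a message $\boldsymbol x$ with $\boldsymbol h_j^{\mathsf T}\boldsymbol x=z_j$ for at least $n-t$ indices $j$ ($\phi$ if none). If $s_i=1$ keep $\boldsymbol w^{(i)}$. Output $\boldsymbol w^{(i)}$ and stop. *)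

From HB Require Import structures.
From mathcomp Require Import all_boot all_order all_algebra.
Import GRing.Theory.
Local Open Scope ring_scope.

(* Processors [1:n] are represented by 'I_n (processor i+1 <-> ordinal i).
   Field elements identified with integers: alpha m is the field element of
   the integer m+1 (0-based); the first k of them are the interpolation
   nodes [1:k]. *)

Definition cool_k (t : nat) : nat := (t %/ 5 + 1)%N.

(* c = ceil(max{l, (t/5+1) log2(n+1)} / k) is the least natural number c
   with k*c >= l and k*c >= (t+5)/5 * log2(n+1), the latter being
   equivalent to (n+1)^(t+5) <= 2^(5 k c). *)
Definition cool_c_ok (n t l c : nat) : bool :=
  (l <= cool_k t * c)%N && ((n.+1) ^ (t + 5) <= 2 ^ (5 * (cool_k t * c)))%N.

Definition is_cool_c (n t l c : nat) : Prop :=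
  cool_c_ok n t l c /\ (forall c', cool_c_ok n t l c' -> (c <= c')%N).

(* Encoding of an l-bit message, zero padded to k*c bits, as a vector of
   k blocks of c bits, each block viewed as an element of GF(2^c) via toF. *)
Definition cool_enc (t l c : nat) (F : Type) (toF : c.-tuple bool -> F)
  (m : l.-tuple bool) : 'rV[F]_(cool_k t) :=
  \row_(q < cool_k t) toF [tuple nth false m (q * c + r) | r < c].

(* Adversary: for a dishonest sender j and a receiver i, the messages it
   sends to i in each phase (missing messages = a default value). *)
Record adversary (n : nat) (F : Type) := Adversary {
  adv1  : 'I_n -> 'I_n -> F * F;
  adv1c : 'I_n -> 'I_n -> bool;
  adv2  : 'I_n -> 'I_n -> option bool;  (* Phase 2 (None = nothing sent) *)
  adv3  : 'I_n -> 'I_n -> option bool;  (* Phase 3 (None = nothing sent) *)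
  adv4  : 'I_n -> 'I_n -> F
}.

Arguments adv1 {n F}. Arguments adv1c {n F}. Arguments adv2 {n F}.
Arguments adv3 {n F}. Arguments adv4 {n F}.

Section COOL.
Variables (n t : nat) (F : fieldType) (alpha : nat -> F).
Let k := cool_k t.

Definition hcoef (i : nat) (j : 'I_k) : F :=
  \prod_(p < k | p != j) ((alpha i - alpha p) / (alpha j - alpha p)).

Definition heval (i : nat) (x : 'rV[F]_k) : F :=
  \sum_(q < k) hcoef i q * x 0 q.

Variables (D : {set 'I_n})                 (* dishonest processors *)
          (w0 : 'I_n -> 'rV[F]_k)         (* initial (encoded) messages *)
          (adv : adversary n F)
          (maj : seq F -> F)               (* most-frequent value, fixed tie-breaking *)
          (dec : ('I_n -> F) -> option 'rV[F]_k) (* Phase 4 decoder; None = phi *)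
          (d : bool).                      (* decision of the BA protocol *)

Definition y (i : 'I_n) (j : 'I_n) : F := heval j (w0 i).

Definition recv1 (i j : 'I_n) : F * F :=
  if j \in D then adv1 adv j i else (y j i, y j j).

Definition u1 (i j : 'I_n) : bool :=
  if j == i then true else recv1 i j == (y i i, y i j).
Definition s1 (i : 'I_n) : bool := (n - t <= \sum_(j < n) u1 i j)%N.

Definition rec1 (i j : 'I_n) : bool :=
  if j == i then s1 i else if j \in D then adv1c adv j i else s1 j.

Definition u2 (i j : 'I_n) : bool := if s1 i then u1 i j && rec1 i j else u1 i j.
Definition s2 (i : 'I_n) : bool := s1 i && (n - t <= \sum_(j < n) u2 i j)%N.
Definition rec2 (i j : 'I_n) : bool :=
  if j == i then s2 i
  else if j \in D then (if adv2 adv j i is Some b then b else rec1 i j)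
  else if s1 j && ~~ s2 j then false else rec1 i j.

Definition u3 (i j : 'I_n) : bool := if s2 i then u2 i j && rec2 i j else u2 i j.
Definition s3 (i : 'I_n) : bool := s2 i && (n - t <= \sum_(j < n) u3 i j)%N.
Definition rec3 (i j : 'I_n) : bool :=
  if j == i then s3 i
  else if j \in D then (if adv3 adv j i is Some b then b else rec2 i j)
  else if s2 j && ~~ s3 j then false else rec2 i j.

Definition vote (i : 'I_n) : bool := (2 * t + 1 <= \sum_(j < n) rec3 i j)%N.

(* Phase 4: updated y^{(i)}_i of a processor with s_i = 0. *)
Definition ymaj (i : 'I_n) : F :=
  maj [seq (recv1 i j).1 | j <- enum 'I_n & rec3 i j].

(* Phase 4 value received by i from j (honest j sends iff s_j = 0 and
   i is in its S_0 \ {j}; otherwise default 0). *)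
Definition recv4 (i j : 'I_n) : F :=
  if j \in D then adv4 adv j i
  else if ~~ s3 j && ~~ rec3 j i && (i != j) then ymaj j else 0.

Definition zval (i j : 'I_n) : F :=
  if j == i then ymaj i
  else if rec3 i j then (recv1 i j).2 else recv4 i j.

(* Output of processor i (None = phi). *)
Definition cool_output (i : 'I_n) : option 'rV[F]_k :=
  if ~~ d then None
  else if s3 i then Some (w0 i)
  else dec (zval i).

End COOL.

Definition decoder_spec (n t : nat) (F : fieldType) (alpha : nat -> F)
  (dec : ('I_n -> F) -> option 'rV[F]_(cool_k t)) : Prop :=
  forall z : 'I_n -> F,
    match dec z return Prop with
    | Some x => (n - t <= \sum_(j < n) (@heval t F alpha j x == z j))%N
    | None => forall x, (\sum_(j < n) (@heval t F alpha j x == z j) < n - t)%N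
    end.

Definition majority_spec (F : eqType) (maj : seq F -> F) : Prop :=
  forall (s : seq F) (v : F), (count_mem v s <= count_mem (maj s) s)%N.

Definition ba_spec (n : nat) (D : {set 'I_n}) (vote : 'I_n -> bool) (d : bool)
  : Prop :=
  forall b, (forall i, i \notin D -> vote i = b) -> d = b.

(* Coding [w] as the symbols [h_j^T w] is a Reed-Solomon code: [h_j^T w] is
   the value at [j] of the polynomial of degree < k interpolating [w] at the
   nodes [1..k], so two distinct messages agree at fewer than [k] processors,
   and [k <= n - t - |D|].
   A processor passing the test of Phase 1 has [n - t - |D|] honest neighbours
   whose own symbol is consistent with its message; by inclusion-exclusion
   three distinct messages cannot all have such a neighbourhood, so at most two
   messages [a <> b] survive Phase 1.  A processor holding [a] that passes
   Phase 3 yields a Phase-2 survivor holding [a] outside the agreement set of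
   [a] and [b] (otherwise all its honest supporters would lie in that set),
   and the honest Phase-1 supporters of that survivor all hold [a].  Two such
   disjoint honest sets of size [n - t - |D|] contradict [n >= 3t + 1], so all
   Phase-3 survivors hold the same message [w].  If the agreement decides 1,
   some honest vote shows that at least [t + 1] honest processors passed
   Phase 3; then both the majority of Phase 4 and the decoder return [w]. *)

From mathcomp Require Import all_boot all_order all_algebra zify.
Import GRing.Theory.

Section LagrangeBasis.
Local Open Scope ring_scope.
Variables (n t : nat) (F : fieldType) (alpha : nat -> F).
Hypothesis k_le_n : (cool_k t <= n)%N.
Hypothesis alpha_inj :
  forall a b : nat, (a < n)%N -> (b < n)%N -> alpha a = alpha b -> a = b.
Local Notation k := (cool_k t).
Local Notation heval := (heval t F alpha).

Lemma alpha_subr_neq0 (p q : 'I_k) : p != q -> alpha p - alpha q != 0.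
Proof.
move=> pq; rewrite subr_eq0; apply: contra pq => /eqP/alpha_inj eq_pq.
by apply/eqP/val_inj/eq_pq; apply: leq_trans k_le_n.
Qed.

Lemma heval_node (q : 'I_k) (x : 'rV[F]_k) : heval q x = x 0 q.
Proof.
rewrite /heval (bigD1 q) //= big1 ?addr0 => [|p pq].
  rewrite /hcoef big1 ?mul1r // => p pq.
  by rewrite divff // alpha_subr_neq0 // eq_sym.
by rewrite /hcoef (bigD1 q) 1?eq_sym //= subrr !mul0r.
Qed.

Lemma hevalB l (a b : 'rV[F]_k) : heval l (a - b) = heval l a - heval l b.
Proof. by rewrite /heval -sumrB; apply: eq_bigr => q _; rewrite !mxE mulrBr. Qed.

Definition lagrange_poly (x : 'rV[F]_k) : {poly F} :=
  \sum_(q < k) (x 0 q * \prod_(p < k | p != q) (alpha q - alpha p)^-1)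
     *: \prod_(p < k | p != q) ('X - (alpha p)%:P).

Lemma horner_lagrange_poly x l : (lagrange_poly x).[alpha l] = heval l x.
Proof.
rewrite /lagrange_poly horner_sum; apply: eq_bigr => q _.
rewrite hornerZ horner_prod /hcoef big_split /=.
under [X in _ * X = _]eq_bigr do rewrite hornerXsubC.
by rewrite mulrAC [RHS]mulrC mulrA.
Qed.

Lemma size_lagrange_poly x : (size (lagrange_poly x) <= k)%N.
Proof.
apply: leq_trans (size_sum _ _ _) _; apply/bigmax_leqP => q _.
apply: leq_trans (size_scale_leq _ _) _.
rewrite size_prod => [|p _]; last by rewrite polyXsubC_eq0.
under eq_bigr do rewrite size_XsubC.
by rewrite sum_nat_const cardC1 card_ord; case: k q => [[]|m] //= _; lia.
Qed.

Lemma lagrange_poly_eq0 x : lagrange_poly x = 0 -> x = 0.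
Proof.
move=> x0; apply/rowP => q.
by rewrite mxE -heval_node -horner_lagrange_poly x0 horner0.
Qed.

Lemma card_heval_eq_lt (a b : 'rV[F]_k) : a != b ->
  (#|[set l : 'I_n | heval l a == heval l b]| < k)%N.
Proof.
move=> ab; set Z := [set l | _].
have p_neq0 : lagrange_poly (a - b) != 0.
  by apply: contra ab => /eqP/lagrange_poly_eq0/eqP; rewrite subr_eq0.
have roots : all (root (lagrange_poly (a - b))) [seq alpha (val l) | l <- enum Z].
  apply/allP => _ /mapP[l lZ ->].
  rewrite /root horner_lagrange_poly hevalB subr_eq0.
  by move: lZ; rewrite mem_enum inE.
have uniq_nodes : uniq [seq alpha (val l) | l <- enum Z].
  rewrite map_inj_in_uniq ?enum_uniq // => l1 l2 _ _ /alpha_inj eq_l.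
  exact: val_inj (eq_l (ltn_ord _) (ltn_ord _)).
have := max_poly_roots p_neq0 roots uniq_nodes.
by rewrite size_map -cardE => /leq_trans; apply; apply: size_lagrange_poly.
Qed.

End LagrangeBasis.

Lemma cool_k_bound t : (5 * (cool_k t - 1) <= t)%N.
Proof. by rewrite /cool_k addnK mulnC leq_divM. Qed.

Lemma sum_bool_card {T : finType} (f : pred T) :
  (\sum_(j : T) f j)%N = #|[set j | f j]|.
Proof.
by rewrite -sum1dep_card [RHS]big_mkcond; apply: eq_bigr => j _; case: (f j).
Qed.

Lemma card_outside_ge {T : finType} (D : {set T}) (f g : pred T) m :
  (m <= \sum_(j : T) f j)%N -> {in ~: D, f =1 g} ->
  (m - #|D| <= #|[set j | (j \notin D) && g j]|)%N.
Proof.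
rewrite sum_bool_card leq_subLR => m_le fg; apply: leq_trans m_le _.
rewrite -(cardsID D [set j | f j]) leq_add ?subset_leq_card ?subsetIr //.
by apply/subsetP => j; rewrite !inE => /andP[jD fj]; rewrite jD -fg ?inE.
Qed.

Lemma card3_le_union_pairs {T : finType} (A B C : {set T}) :
  (#|A| + #|B| + #|C| <=
   #|A :|: B :|: C| + #|A :&: B| + #|A :&: C| + #|B :&: C|)%N.
Proof.
have AB := cardsUI A B; have ABC := cardsUI (A :|: B) C.
have := cardsUI (A :&: C) (B :&: C); rewrite setIUl in ABC; lia.
Qed.

Section Execution.
Variables (n t : nat) (F : fieldType) (alpha : nat -> F)
  (D : {set 'I_n}) (w0 : 'I_n -> 'rV[F]_(cool_k t)) (adv : adversary n F).
Hypothesis n_gt3t : (3 * t + 1 <= n)%N.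
Hypothesis card_D : (#|D| <= t)%N.
Hypothesis alpha_inj :
  forall a b : nat, (a < n)%N -> (b < n)%N -> alpha a = alpha b -> a = b.

Local Notation k := (cool_k t).
Local Notation hv l x := (heval t F alpha l x).
Local Notation RV1 := (recv1 n t F alpha D w0 adv).
Local Notation U1 := (u1 n t F alpha D w0 adv).
Local Notation S1 := (s1 n t F alpha D w0 adv).
Local Notation S2 := (s2 n t F alpha D w0 adv).
Local Notation S3 := (s3 n t F alpha D w0 adv).
Local Notation R1 := (rec1 n t F alpha D w0 adv).
Local Notation R2 := (rec2 n t F alpha D w0 adv).
Local Notation R3 := (rec3 n t F alpha D w0 adv).

Lemma k_le_quorum : (k <= n - t - #|D|)%N.
Proof. by have := cool_k_bound t; lia. Qed.

Lemma card_agree_lt {a b : 'rV[F]_k} : a != b ->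
  (#|[set l : 'I_n | hv l a == hv l b]| < k)%N.
Proof.
have k_le_n : (k <= n)%N by have := k_le_quorum; lia.
exact: card_heval_eq_lt.
Qed.

Lemma s2_s1 {i} : S2 i -> S1 i.
Proof. by case/andP. Qed.

Lemma s3_s2 {i} : S3 i -> S2 i.
Proof. by case/andP. Qed.

Lemma rec1_honest i j : j \notin D -> R1 i j = S1 j.
Proof. by move=> jD; rewrite /rec1 (negbTE jD); case: eqP => [->|]. Qed.

Lemma rec2_honest i j : j \notin D -> R2 i j = S2 j.
Proof.
move=> jD; rewrite /rec2 (negbTE jD) rec1_honest //; case: eqP => [->|_] //.
by case: (boolP (S2 j)) => [/s2_s1 ->|]; rewrite ?andbF //; case: (S1 j).
Qed.

Lemma rec3_honest i j : j \notin D -> R3 i j = S3 j.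
Proof.
move=> jD; rewrite /rec3 (negbTE jD) rec2_honest //; case: eqP => [->|_] //.
by case: (boolP (S3 j)) => [/s3_s2 ->|]; rewrite ?andbF //; case: (S2 j).
Qed.

Definition linked (i j : 'I_n) : bool :=
  (j == i) || (hv i (w0 j) == hv i (w0 i)) && (hv j (w0 j) == hv j (w0 i)).

Lemma recv1_honest i j : j \notin D -> RV1 i j = (hv i (w0 j), hv j (w0 j)).
Proof. by move=> jD; rewrite /recv1 (negbTE jD). Qed.

Lemma u1_honest i j : j \notin D -> U1 i j = linked i j.
Proof.
by move=> jD; rewrite /u1 /linked recv1_honest // xpair_eqE; case: eqP.
Qed.

Lemma s1_quorum {i} : S1 i ->
  (n - t - #|D| <= #|[set j | (j \notin D) && linked i j]|)%N.
Proof.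
by move=> s1i; apply: card_outside_ge s1i _ => j; rewrite inE => /u1_honest.
Qed.

Lemma s2_quorum {i} : S2 i ->
  (n - t - #|D| <= #|[set j | (j \notin D) && (linked i j && S1 j)]|)%N.
Proof.
move=> s2i; have s1i := s2_s1 s2i; move: s2i; rewrite /s2 s1i => s2i.
apply: card_outside_ge s2i _ => j; rewrite inE => jD.
by rewrite /u2 s1i u1_honest ?rec1_honest.
Qed.

Lemma s3_quorum {i} : S3 i ->
  (n - t - #|D| <= #|[set j | (j \notin D) && (linked i j && S1 j && S2 j)]|)%N.
Proof.
move=> s3i; have s2i := s3_s2 s3i; have s1i := s2_s1 s2i.
move: s3i; rewrite /s3 s2i => s3i.
apply: card_outside_ge s3i _ => j; rewrite inE => jD.
by rewrite /u3 /u2 s1i s2i u1_honest ?rec1_honest ?rec2_honest.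
Qed.

Lemma linked_agree {x y : 'I_n} : w0 x != w0 y -> linked x y ->
  (hv x (w0 x) == hv x (w0 y)) && (hv y (w0 x) == hv y (w0 y)).
Proof.
move=> xy /orP[/eqP yx | /andP[/eqP -> /eqP ->]]; last by rewrite !eqxx.
by rewrite yx eqxx in xy.
Qed.

Lemma s1_two_messages {i j} : S1 i -> S1 j -> w0 i != w0 j ->
  forall l, S1 l -> (w0 l == w0 i) || (w0 l == w0 j).
Proof.
move=> s1i s1j ij l s1l; apply/norP; rewrite ![w0 l == _]eq_sym => -[il jl].
pose X (m : 'rV[F]_k) := [set x | (x \notin D) && (hv x m == hv x (w0 x))].
have X_big p : S1 p -> (n - t - #|D| <= #|X (w0 p)|)%N.
  move=> s1p; apply: leq_trans (s1_quorum s1p) (subset_leq_card _).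
  apply/subsetP => x; rewrite !inE.
  by case/andP=> -> /orP[/eqP -> | /andP[_ /eqP ->]]; rewrite eqxx.
have XI_small (a b : 'rV[F]_k) : a != b -> (#|X a :&: X b| < k)%N.
  move=> ab; apply: leq_ltn_trans (card_agree_lt ab); apply: subset_leq_card.
  apply/subsetP => x; rewrite !inE => /andP[/andP[_ /eqP xa] /andP[_ /eqP xb]].
  by rewrite xa xb.
have XU_small : (#|X (w0 i) :|: X (w0 j) :|: X (w0 l)| <= #|~: D|)%N.
  apply/subset_leq_card/subsetP => x.
  by rewrite !inE => /orP[/orP[]|] /andP[].
have := cardsC D; rewrite card_ord.
have := card3_le_union_pairs (X (w0 i)) (X (w0 j)) (X (w0 l)).
have := XI_small _ _ ij; have := XI_small _ _ il; have := XI_small _ _ jl.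
have := X_big _ s1i; have := X_big _ s1j; have := X_big _ s1l.
by have := cool_k_bound t; lia.
Qed.

Definition s1_holders (m : 'rV[F]_k) : {set 'I_n} :=
  [set l | (l \notin D) && S1 l && (w0 l == m)].

Section TwoMessages.
Variables (a b : 'rV[F]_k).
Hypothesis a_neq_b : a != b.
Hypothesis s1_msg : forall {l}, S1 l -> (w0 l == a) || (w0 l == b).

Lemma s2_msg_quorum {y} : S2 y -> w0 y = a -> hv y a != hv y b ->
  (n - t - #|D| <= #|s1_holders a|)%N.
Proof.
move=> s2y ya yab; apply: leq_trans (s2_quorum s2y) (subset_leq_card _).
apply/subsetP => l; rewrite !inE => /andP[-> /andP[yl s1l]]; rewrite s1l /=.
case/orP: (s1_msg s1l) => // /eqP lb.
have yl_neq : w0 y != w0 l by rewrite ya lb.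
by case/andP: (linked_agree yl_neq yl); rewrite ya lb (negbTE yab).
Qed.

Lemma s3_s2_witness {x} : S3 x -> w0 x = a ->
  exists2 y, S2 y && (w0 y == a) & hv y a != hv y b.
Proof.
move=> s3x xa.
case: (pickP [pred y | S2 y && (w0 y == a) && (hv y a != hv y b)]).
  by move=> y /andP[]; exists y.
move=> none; have : (n - t - #|D| <= #|[set l : 'I_n | hv l a == hv l b]|)%N.
  apply: leq_trans (s3_quorum s3x) (subset_leq_card _); apply/subsetP => l.
  rewrite !inE => /andP[_ /andP[/andP[xl s1l] s2l]].
  case/orP: (s1_msg s1l) => /eqP la.
    by apply: contraT => lab; have := none l; rewrite /= s2l la eqxx lab.
  have xl_neq : w0 x != w0 l by rewrite xa la.
  by case/andP: (linked_agree xl_neq xl) => _; rewrite xa la.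
by have := card_agree_lt a_neq_b; have := k_le_quorum; lia.
Qed.

Lemma s3_msg_quorum {x} : S3 x -> w0 x = a ->
  (n - t - #|D| <= #|s1_holders a|)%N.
Proof.
move=> s3x xa; have [y /andP[s2y /eqP ya] yab] := s3_s2_witness s3x xa.
exact: s2_msg_quorum s2y ya yab.
Qed.

End TwoMessages.

Lemma s3_unique i j : S3 i -> S3 j -> w0 i = w0 j.
Proof.
move=> s3i s3j; apply/eqP/negPn/negP => ij.
have s1i := s2_s1 (s3_s2 s3i); have s1j := s2_s1 (s3_s2 s3j).
have ji : w0 j != w0 i by rewrite eq_sym.
have msg_ij := s1_two_messages s1i s1j ij.
have msg_ji l (s1l : S1 l) : (w0 l == w0 j) || (w0 l == w0 i).
  by rewrite orbC msg_ij.
have quorum_i := s3_msg_quorum _ _ ij msg_ij s3i erefl.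
have quorum_j := s3_msg_quorum _ _ ji msg_ji s3j erefl.
have disj : s1_holders (w0 i) :&: s1_holders (w0 j) = set0.
  apply/setP => l; rewrite !inE; apply/negP.
  by case/andP=> /andP[_ /eqP li] /andP[_ /eqP lj]; rewrite -li -lj eqxx in ij.
have honest : (#|s1_holders (w0 i) :|: s1_holders (w0 j)| <= #|~: D|)%N.
  apply/subset_leq_card/subsetP => l.
  by rewrite !inE => /orP[] /andP[/andP[-> _] _].
have := cardsUI (s1_holders (w0 i)) (s1_holders (w0 j)).
rewrite disj cards0 addn0; have := cardsC D; rewrite card_ord; lia.
Qed.

Lemma vote_s3_many {i} : vote n t F alpha D w0 adv i ->
  (t + 1 <= #|[set l | (l \notin D) && S3 l]|)%N.
Proof.
move=> vote_i.
have : (2 * t + 1 - #|D| <= #|[set l | (l \notin D) && S3 l]|)%N.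
  by apply: card_outside_ge vote_i _ => j; rewrite inE => /rec3_honest.
lia.
Qed.

Section Output.
Variables (maj : seq F -> F) (dec : ('I_n -> F) -> option 'rV[F]_k) (d : bool).
Hypothesis maj_spec : majority_spec F maj.
Hypothesis dec_spec : decoder_spec n t F alpha dec.

Local Notation YM := (ymaj n t F alpha D w0 adv maj).
Local Notation ZV := (zval n t F alpha D w0 adv maj).
Local Notation OUT := (cool_output n t F alpha D w0 adv maj dec d).

Section CommonMessage.
Variable w : 'rV[F]_k.
Hypothesis s3_msg : forall {l}, S3 l -> w0 l = w.
Hypothesis s3_many : (t + 1 <= #|[set l | (l \notin D) && S3 l]|)%N.

Lemma ymaj_eq m : YM m = hv m w.
Proof.
rewrite /ymaj; set s := [seq _ | _ <- _].
have count_s v : count_mem v s = #|[set j | R3 m j && ((RV1 m j).1 == v)]|.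
  rewrite /s count_map count_filter -sum1_count big_enum_cond /= sum1dep_card.
  by apply: eq_card => j; rewrite !inE /= andbC.
have honest_count : (t + 1 <= count_mem (hv m w) s)%N.
  rewrite count_s; apply: leq_trans s3_many (subset_leq_card _).
  apply/subsetP => j.
  rewrite !inE => /andP[jD s3j].
  by rewrite rec3_honest // s3j recv1_honest //= s3_msg.
apply/eqP/negPn/negP => maj_neq.
have : (count_mem (maj s) s <= #|D|)%N.
  rewrite count_s; apply/subset_leq_card/subsetP => j; rewrite !inE.
  apply: contraLR => jD; rewrite rec3_honest // recv1_honest //=.
  by apply/andP => -[/s3_msg -> /eqP mj]; rewrite mj eqxx in maj_neq.
by have := maj_spec s (hv m w); lia.
Qed.

Lemma zval_eq i j : i \notin D -> ~~ S3 i -> j \notin D -> ZV i j = hv j w.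
Proof.
move=> iD s3i jD; rewrite /zval.
case: eqP => [-> | /eqP ji]; first exact: ymaj_eq.
rewrite rec3_honest //; case: (boolP (S3 j)) => [s3j | ns3j].
  by rewrite recv1_honest //= s3_msg.
by rewrite /recv4 (negbTE jD) ns3j rec3_honest // s3i eq_sym ji ymaj_eq.
Qed.

Lemma dec_zval i : i \notin D -> ~~ S3 i -> dec (ZV i) = Some w.
Proof.
move=> iD s3i; have := dec_spec (ZV i); case: (dec _) => [x | ] dec_ok.
  congr Some; apply/eqP/negPn/negP => xw.
  have agree_sub : [set j | (j \notin D) && (hv j x == hv j w)] \subset
                   [set j : 'I_n | hv j x == hv j w].
    by apply/subsetP => j; rewrite !inE => /andP[].
  have : (n - t - #|D| < k)%N.
    apply: leq_ltn_trans (card_agree_lt xw).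
    apply: leq_trans (subset_leq_card agree_sub).
    by apply: card_outside_ge dec_ok _ => j; rewrite inE => jD; rewrite zval_eq.
  by rewrite ltnNge k_le_quorum.
have : (#|~: D| <= \sum_(j < n) (hv j w == ZV i j))%N.
  rewrite sum_bool_card; apply/subset_leq_card/subsetP => j.
  by rewrite !inE => jD; rewrite zval_eq.
by have := dec_ok w; have := cardsC D; rewrite card_ord; lia.
Qed.

Lemma cool_output_honest i : i \notin D -> OUT i = if d then Some w else None.
Proof.
move=> iD; rewrite /cool_output; case: d => //=.
by case: ifP => [/s3_msg -> // | /negbT s3i]; apply: dec_zval.
Qed.

End CommonMessage.

Lemma cool_output_consistent :
  ba_spec n D (vote n t F alpha D w0 adv) d ->
  forall i j, i \notin D -> j \notin D -> OUT i = OUT j.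
Proof.
move=> ba i j iD jD.
have [v /andP[_ vote_v] | no_vote] :=
  pickP [pred v | (v \notin D) && vote n t F alpha D w0 adv v].
  have s3_many := vote_s3_many vote_v.
  have [z] : exists z, z \in [set l | (l \notin D) && S3 l].
    by apply/set0Pn; rewrite -card_gt0; lia.
  rewrite inE => /andP[_ s3z].
  have s3_msg l : S3 l -> w0 l = w0 z by move/s3_unique; apply.
  by rewrite !(cool_output_honest _ s3_msg s3_many).
rewrite /cool_output (ba false) // => v vD.
by move: (no_vote v); rewrite /= vD.
Qed.

End Output.
End Execution.

Theorem lemma4
  (n t l c : nat) (F : finFieldType)
  (Hn : (3 * t + 1 <= n)%N)
  (Hc : is_cool_c n t l c)
  (HF : #|F| = (2 ^ c)%N)
  (toF : c.-tuple bool -> F) (HtoF : bijective toF)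
  (alpha : nat -> F)
  (Halpha_inj : forall a b : nat, (a < n)%N -> (b < n)%N -> alpha a = alpha b -> a = b)
  (Halpha_nz : forall a : nat, (a < n)%N -> alpha a != 0%R)
  (msg : 'I_n -> l.-tuple bool)
  (D : {set 'I_n}) (HD : (#|D| <= t)%N)
  (adv : adversary n F)
  (maj : seq F -> F) (Hmaj : majority_spec F maj)
  (dec : ('I_n -> F) -> option 'rV[F]_(cool_k t))
  (Hdec : decoder_spec n t F alpha dec)
  (d : bool)
  (Hd : ba_spec n D (vote n t F alpha D (fun i => cool_enc t l c F toF (msg i)) adv) d) :
  forall i j : 'I_n, i \notin D -> j \notin D ->
    cool_output n t F alpha D (fun i => cool_enc t l c F toF (msg i)) adv maj dec d i =
    cool_output n t F alpha D (fun i => cool_enc t l c F toF (msg i)) adv maj dec d j.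
Proof.
exact: (@cool_output_consistent n t F alpha D _ adv Hn HD Halpha_inj
          maj dec d Hmaj Hdec Hd).
Qed.
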